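(* Let $p$ be a prime, let $C=\langle t\rangle$ be the infinite cyclic group and $C\otimes\mathbb Z_p=\{t^\alpha:\alpha\in\mathbb Z_p\}$ the group of $p$-adic integers written multiplicatively. Let $\tau:C\otimes\mathbb Z_p\to\mathbb Z/p[\![x]\!]$ be the continuous multiplicative homomorphism with $\tau(t)=1-x$, and consider the induced ring homomorphism $\mathbb Z/p[C\otimes\mathbb Z_p]\to\mathbb Z/p[\![x]\!]$ from the (discrete) group algebra. Then the kernel of the multiplication map $$\mathbb Z/p[\![x]\!]\otimes_{\mathbb Z/p[C\otimes\mathbb Z_p]}\mathbb Z/p[\![x]\!]\longrightarrow \mathbb Z/p[\![x]\!],\qquad a\otimes b\mapsto ab,$$ is uncountable.
   Context: $\tau(t^\alpha)=(1-x)^\alpha$, well defined and continuous since $(1-x)^{p^i}=1-x^{p^i}$. $\mathbb Z/p[C\otimes\mathbb Z_p]$ is the group algebra of the abstract group $C\otimes\mathbb Z_p$, and $\mathbb Z/p[\![x]\!]$ is a module over it via this ring homomorphism. *)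

From mathcomp Require Import all_boot all_algebra.
Set Implicit Arguments. Unset Strict Implicit. Unset Printing Implicit Defensive.
Import GRing.Theory.
Local Open Scope ring_scope.

Definition pser (p : nat) := nat -> 'F_p.
Definition ps_zero (p : nat) : pser p := fun _ => 0.
Definition ps_add (p : nat) (f g : pser p) : pser p := fun k => f k + g k.
Definition ps_mul (p : nat) (f g : pser p) : pser p :=
  fun k => \sum_(i < k.+1) f i * g (k - i)%N.

(* p-adic integers as compatible sequences of residues a_n mod p^n.
   The element alpha corresponds to t^alpha in C (x) Z_p. *)
Record padic (p : nat) := Padic {
  padic_seq : nat -> nat;
  padic_bound : forall n, (padic_seq n < p ^ n)%N;
  padic_compat : forall n, (padic_seq n.+1 %% p ^ n)%N = padic_seq n }.

(* tau(t^alpha) = (1-x)^alpha: its k-th coefficient is (-1)^k binom(alpha,k)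
   mod p, computed via the residue of alpha mod p^k (k < p^k). *)
Definition tau (p : nat) (a : padic p) : pser p :=
  fun k => (-1) ^+ k * ('C(padic_seq a k, k))%:R.

(* Elements of the group algebra Z/p[C (x) Z_p] as finite formal sums
   sum c_i t^{alpha_i}, and the induced ring homomorphism to Z/p[[x]]. *)
Definition grpalg (p : nat) := seq ('F_p * padic p).
Definition ga_hom (p : nat) (r : grpalg p) : pser p :=
  fun k => \sum_(c <- r) c.1 * tau c.2 k.

Definition balanced (p : nat) (M : zmodType) (beta : pser p -> pser p -> M) : Prop :=
  [/\ forall a a' b, beta (ps_add a a') b = beta a b + beta a' b,
      forall a b b', beta a (ps_add b b') = beta a b + beta a b' &
      forall (r : grpalg p) a b,
        beta (ps_mul (ga_hom r) a) b = beta a (ps_mul (ga_hom r) b)].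

(* Elements of Z/p[[x]] (x)_{Z/p[C (x) Z_p]} Z/p[[x]] are represented by finite
   sums of pure tensors sum a_i (x) b_i; two such sums denote the same element
   iff every balanced map agrees on them (universal property of the tensor
   product). *)
Definition tensor (p : nat) := seq (pser p * pser p).
Definition tensor_eq (p : nat) (u v : tensor p) : Prop :=
  forall (M : zmodType) (beta : pser p -> pser p -> M), balanced beta ->
    \sum_(ab <- u) beta ab.1 ab.2 = \sum_(ab <- v) beta ab.1 ab.2.

Definition tmult (p : nat) (u : tensor p) : pser p :=
  fun k => \sum_(ab <- u) ps_mul ab.1 ab.2 k.

(* Every [x (x) 1 - 1 (x) x] lies in the kernel; we show that [d (x) 1 - 1 (x) d]
   and [d' (x) 1 - 1 (x) d'] differ as soon as [1] and [d - d'] are linearly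
   independent over the ring [S] of "sparse" series: those that, modulo every
   [x^(p^N)], are combinations of a bounded number of binomial series
   [(1 - x)^m] with [m < p^N].  [S] contains the image of the group algebra,
   because [(1 - x)^alpha] agrees with [(1 - x)^(alpha mod p^N)] modulo
   [x^(p^N)].  By Zorn's lemma there is then an additive [S]-linear
   [phi : F_p[[x]] -> Frac F_p[[x]]] with [phi 1 = 0] and [phi (d - d') = 1],
   and [a (x) b |-> phi a * b] is a balanced map separating the two tensors.
   Given a sequence of kernel elements, pick [d_n] whose tensor is the [n]-th
   one when possible, and build [d] diagonally: its coefficients in
   [[p^N, p^(N+1))] are a block chosen so that no relation [t (d - d_n) = s]
   with [n <= N] and [t], [s] of sparsity at most [N] holds to the relevant
   precision.  Such a block exists by counting: each relation is satisfied by
   at most one block, and there are [p^O(N^2)] relations but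
   [p^((p-1) p^N)] blocks. *)

From mathcomp Require Import all_boot all_algebra.
From HB Require Import structures.
From mathcomp Require Import boolp classical_sets functions.
From mathcomp Require Import zify ring.
Set Implicit Arguments. Unset Strict Implicit. Unset Printing Implicit Defensive.
Import GRing.Theory.
Local Open Scope ring_scope.

Local Notation "x %:F" := (@FracField.tofrac _ x).

Definition indep_over (R : pzRingType) (S : R -> Prop) (e : R) :=
  forall t s, S t -> S s -> t * e = s -> t = 0.

Section LinearForm.
Variables (R : idomainType) (S : R -> Prop).
Hypotheses (S1 : S 1) (SD : forall a b, S a -> S b -> S (a + b))
  (SN : forall a, S a -> S (- a)) (SM : forall a b, S a -> S b -> S (a * b)).
Variable e : R.
Hypothesis e_indep : indep_over S e.
Local Notation L := {fraction R}.

Let S0 : S 0. Proof. by rewrite -(addrN 1); apply: SD => //; apply: SN. Qed.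
Let SB a b : S a -> S b -> S (a - b). Proof. by move=> ? ?; apply: SD => //; apply: SN. Qed.

Local Open Scope classical_set_scope.

(* Graphs of partial [S]-linear maps [R -> Frac R] extending [s + t e |-> t]. *)
Definition admissible (G : set (R * L)) :=
  [/\ forall a y y', G (a, y) -> G (a, y') -> y = y',
      forall a y b z, G (a, y) -> G (b, z) -> G (a + b, y + z),
      forall s a y, S s -> G (a, y) -> G (s * a, s%:F * y) &
      forall s t, S s -> S t -> G (s + t * e, t%:F)].

Definition base_graph (c : R * L) :=
  exists s t, [/\ S s, S t, c.1 = s + t * e & c.2 = t%:F].

Lemma admissible_base : admissible base_graph.
Proof.
split.
- move=> a y y' [s [t [Ss St /= -> ->]]] [s' [t' [Ss' St' /= eq_a ->]]].
  have : (t - t') * e = s' - s.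
    by transitivity ((s + t * e) - s - t' * e); [ring | rewrite eq_a; ring].
  by move/e_indep => /(_ (SB St St') (SB Ss' Ss)) /eqP; rewrite subr_eq0 => /eqP ->.
- move=> a y b z [s [t [Ss St /= -> ->]]] [s' [t' [Ss' St' /= -> ->]]].
  exists (s + s'), (t + t'); split; [exact: SD | exact: SD | | by rewrite rmorphD].
  by rewrite /= mulrDl addrACA.
- move=> s a y Ss [s1 [t [Ss1 St /= -> ->]]].
  exists (s * s1), (s * t); split; [exact: SM | exact: SM | | by rewrite rmorphM].
  by rewrite /= mulrDr mulrA.
- by move=> s t Ss St; exists s, t.
Qed.

Lemma admissible0 G : admissible G -> G (0, 0).
Proof. by case=> _ _ _ /(_ 0 0 S0 S0); rewrite mul0r addr0 rmorph0. Qed.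

Lemma admissibleN G a y : admissible G -> G (a, y) -> G (- a, - y).
Proof.
case=> _ _ GZ _ Gay; have := GZ (-1) a y (SN S1) Gay.
by rewrite rmorphN1 !mulN1r.
Qed.

Section Extension.
Variable A : set (R * L).
Hypothesis A_adm : admissible A.
Variable a : R.
Hypothesis a_new : forall y, ~ A (a, y).

(* If [t a] already has a value [y] for some nonzero [t] in [S], linearity
   forces the value [y / t] at [a]; otherwise any value will do. *)
Definition ext_value : L :=
  if pselect (exists ty : R * L, [/\ S ty.1, ty.1 != 0 & A (ty.1 * a, ty.2)])
  is left ex then let ty := projT1 (cid ex) in ty.2 / ty.1%:F else 0.

Lemma ext_valueP t y : S t -> A (t * a, y) -> y = t%:F * ext_value.
Proof.
move=> St Ay; case: A_adm => A_fun _ AZ _.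
rewrite /ext_value; case: pselect => [ex|nex].
  case: (cid ex) => -[t0 y0] /= [St0 t0_neq0 Ay0].
  have := AZ t _ _ St Ay0; rewrite mulrA [t * t0]mulrC -mulrA => Ay0'.
  have := A_fun _ _ _ Ay0' (AZ t0 _ _ St0 Ay) => eq_y.
  have t0F : t0%:F != 0 by rewrite tofrac_eq0.
  by rewrite mulrA eq_y [t0%:F * y]mulrC -mulrA mulfV // mulr1.
have t0 : t = 0 by apply/eqP; apply: contra_notT nex => t_neq0; exists (t, y).
move: Ay; rewrite t0 mul0r rmorph0 mul0r => A0.
exact: A_fun _ _ _ A0 (admissible0 A_adm).
Qed.

Definition ext_graph (c : R * L) :=
  exists w yw t, [/\ A (w, yw), S t, c.1 = w + t * a & c.2 = yw + t%:F * ext_value].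

Lemma admissible_ext : admissible ext_graph.
Proof.
case: (A_adm) => A_fun AD AZ Abase; split.
- move=> c y y' [w [yw [t [Aw St /= -> ->]]]] [w' [yw' [t' [Aw' St' /= eq_c ->]]]].
  have : w' - w = (t - t') * a.
    by transitivity ((w' + t' * a) - w - t' * a); [ring | rewrite -eq_c; ring].
  move=> eq_w; have := AD _ _ _ _ Aw' (admissibleN A_adm Aw); rewrite eq_w.
  move/(ext_valueP (SB St St')); rewrite rmorphB => eq_y.
  have -> : yw' = yw + (t%:F - t'%:F) * ext_value by rewrite -eq_y; ring.
  ring.
- move=> c y d z [w [yw [t [Aw St /= -> ->]]]] [w' [yw' [t' [Aw' St' /= -> ->]]]].
  exists (w + w'), (yw + yw'), (t + t'); split; [exact: AD | exact: SD | |].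
    by rewrite /= mulrDl addrACA.
  by rewrite /= rmorphD mulrDl addrACA.
- move=> s c y Ss [w [yw [t [Aw St /= -> ->]]]].
  exists (s * w), (s%:F * yw), (s * t); split; [exact: AZ | exact: SM | |].
    by rewrite /= mulrDr mulrA.
  by rewrite /= rmorphM mulrDr mulrA.
- move=> s t Ss St; exists (s + t * e), t%:F, 0.
  split; [exact: Abase | exact: S0 | by rewrite /= mul0r addr0 |].
  by rewrite /= rmorph0 mul0r addr0.
Qed.

Lemma ext_graph_proper : A `<` ext_graph.
Proof.
split.
  move=> [c y] Acy; exists c, y, 0.
  by split; [| exact: S0 | rewrite /= mul0r addr0 | rewrite /= rmorph0 mul0r addr0].
move=> /(_ (a, ext_value)) ext_sub; apply: (a_new (y := ext_value)); apply: ext_sub.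
exists 0, 0, 1.
split; [exact: admissible0 | exact: S1 | by rewrite /= mul1r add0r |].
by rewrite /= rmorph1 mul1r add0r.
Qed.

End Extension.

Lemma admissible_bigcup (F : set (set (R * L))) :
  F `<=` (fun G => G = set0 \/ admissible G) -> total_on F subset ->
  \bigcup_(G in F) G = set0 \/ admissible (\bigcup_(G in F) G).
Proof.
move=> F_adm F_chain.
have [[G0 [FG0 [c0 G0c0]]]|F0] := pselect (exists G, F G /\ exists c, G c); last first.
  left; apply/seteqP; split=> // c [G FG Gc]; apply: F0; exists G; split=> //; by exists c.
have adm G c : F G -> G c -> admissible G.
  by move=> FG Gc; case: (F_adm G FG) => // G_empty; rewrite G_empty in Gc.
right; split.
- move=> x y y' [G1 F1 G1y] [G2 F2 G2y].
  have [sub|sub] := F_chain _ _ F1 F2.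
    by case: (adm _ _ F2 G2y) => G_fun _ _ _; apply: G_fun (sub _ G1y) G2y.
  by case: (adm _ _ F1 G1y) => G_fun _ _ _; apply: G_fun G1y (sub _ G2y).
- move=> x y u z [G1 F1 G1y] [G2 F2 G2z].
  have [sub|sub] := F_chain _ _ F1 F2.
    by case: (adm _ _ F2 G2z) => _ GD _ _; exists G2 => //; apply: GD (sub _ G1y) G2z.
  by case: (adm _ _ F1 G1y) => _ GD _ _; exists G1 => //; apply: GD G1y (sub _ G2z).
- move=> s x y Ss [G1 F1 G1y]; exists G1 => //.
  by case: (adm _ _ F1 G1y) => _ _ GZ _; apply: GZ.
- move=> s t Ss St; exists G0 => //.
  by case: (adm _ _ FG0 G0c0) => _ _ _ Gbase; apply: Gbase.
Qed.

(* A maximal admissible graph (Zorn) is total, since otherwise [admissible_ext]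
   would extend it. *)
Lemma exists_linear_form : exists phi : R -> L,
  [/\ {morph phi : x y / x + y}, forall s x, S s -> phi (s * x) = s%:F * phi x,
      phi 1 = 0 & phi e = 1].
Proof.
have [A [A_adm A_max]] := Zorn_bigcup admissible_bigcup.
have {}A_adm : admissible A.
  case: A_adm => // A0; exfalso.
  apply: (A_max base_graph); last by right; exact: admissible_base.
  rewrite A0; split=> // /(_ (0 + 0 * e, 0%:F)); apply.
  by exists 0, 0; split.
have A_total x : exists y, A (x, y).
  apply: contrapT => x_new.
  have x_fresh y : ~ A (x, y) by move=> Ay; apply: x_new; exists y.
  by apply: (A_max (ext_graph A x)); [exact: ext_graph_proper | right; exact: admissible_ext].
pose phi x := projT1 (cid (A_total x)).
have phiA x : A (x, phi x) by rewrite /phi; case: cid.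
case: (A_adm) => A_fun AD AZ Abase.
exists phi; split.
- by move=> x y; apply: A_fun (phiA _) (AD _ _ _ _ (phiA x) (phiA y)).
- by move=> s x Ss; apply: A_fun (phiA _) (AZ _ _ _ Ss (phiA x)).
- by apply: A_fun (phiA _) _; have := Abase 1 0 S1 S0; rewrite mul0r addr0 rmorph0.
- by apply: A_fun (phiA _) _; have := Abase 0 1 S0 S1; rewrite mul1r add0r rmorph1.
Qed.

End LinearForm.

Section PowerSeriesRing.
Variable p : nat.
Local Notation R := (pser p).

HB.instance Definition _ := GRing.Zmodule.copy R (nat -> 'F_p).

Definition ps_of_poly (q : {poly 'F_p}) : R := fun k => q`_k.
Definition ps_trunc n (f : R) : {poly 'F_p} := \poly_(i < n) f i.
Definition eqmodX n (f g : R) := forall k, (k < n)%N -> f k = g k.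

Lemma coef_ps_of_poly (q : {poly 'F_p}) k : ps_of_poly q k = q`_k.
Proof. by []. Qed.

Lemma ps_mul_poly (A B : {poly 'F_p}) :
  ps_mul (ps_of_poly A) (ps_of_poly B) = ps_of_poly (A * B).
Proof. by apply: funext => k; rewrite /ps_mul /ps_of_poly coefM. Qed.

Lemma eqmodX_ps_mul n (f f' g g' : R) :
  eqmodX n f f' -> eqmodX n g g' -> eqmodX n (ps_mul f g) (ps_mul f' g').
Proof.
move=> eqf eqg k kn; apply: eq_bigr => i _; have := ltn_ord i.
by rewrite ltnS => ik; rewrite eqf ?eqg //; lia.
Qed.

Lemma eqmodX_trunc n (f : R) : eqmodX n f (ps_of_poly (ps_trunc n f)).
Proof. by move=> k kn; rewrite /ps_of_poly coef_poly kn. Qed.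

Lemma eqmodX_ps_mul_trunc n (f g : R) :
  eqmodX n (ps_mul f g) (ps_of_poly (ps_trunc n f * ps_trunc n g)).
Proof. by rewrite -ps_mul_poly; apply: eqmodX_ps_mul; apply: eqmodX_trunc. Qed.

Lemma ps_mulC : commutative (@ps_mul p).
Proof.
move=> f g; apply: funext => k.
rewrite (eqmodX_ps_mul_trunc (n := k.+1) f g (ltnSn k)).
by rewrite (eqmodX_ps_mul_trunc (n := k.+1) g f (ltnSn k)) mulrC.
Qed.

Lemma ps_mulA : associative (@ps_mul p).
Proof.
move=> f g h; apply: funext => k.
have := eqmodX_ps_mul (eqmodX_trunc (n := k.+1) f) (eqmodX_ps_mul_trunc g h).
have := eqmodX_ps_mul (eqmodX_ps_mul_trunc (n := k.+1) f g) (eqmodX_trunc h).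
by rewrite !ps_mul_poly => -> // -> //; rewrite mulrA.
Qed.

Lemma ps_mul1 : left_id (ps_of_poly 1) (@ps_mul p).
Proof.
move=> f; apply: funext => k; rewrite /ps_mul big_ord_recl /ps_of_poly coef1 mul1r subn0.
by rewrite big1 ?addr0 // => i _; rewrite coef1 mul0r.
Qed.

Lemma ps_mulDl : left_distributive (@ps_mul p) +%R.
Proof.
move=> f g h; apply: funext => k.
transitivity (ps_mul f h k + ps_mul g h k) => //.
by rewrite /ps_mul -big_split; apply: eq_bigr => i _; rewrite mulrDl.
Qed.

Lemma ps_one_neq0 : ps_of_poly 1 != 0.
Proof.
by apply/eqP => /(congr1 (fun f => f 0%N)) /eqP; rewrite /ps_of_poly coef1 oner_eq0.
Qed.

HB.instance Definition _ :=
  GRing.Zmodule_isComNzRing.Build R ps_mulA ps_mulC ps_mul1 ps_mulDl ps_one_neq0.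

Lemma eqmodX_mul n (f f' g g' : R) :
  eqmodX n f f' -> eqmodX n g g' -> eqmodX n (f * g) (f' * g').
Proof. exact: eqmodX_ps_mul. Qed.

Lemma ps_of_poly_is_zmod_morphism : zmod_morphism ps_of_poly.
Proof. by move=> A B; apply: funext => k; rewrite /ps_of_poly coefB. Qed.

HB.instance Definition _ :=
  GRing.isZmodMorphism.Build {poly 'F_p} R ps_of_poly ps_of_poly_is_zmod_morphism.
HB.instance Definition _ :=
  GRing.isMonoidMorphism.Build {poly 'F_p} R ps_of_poly
    (erefl, fun A B => esym (ps_mul_poly A B)).

Lemma coefps0 k : (0 : R) k = 0. Proof. by []. Qed.
Lemma coefpsD (f g : R) k : (f + g) k = f k + g k. Proof. by []. Qed.
Lemma coefpsN (f : R) k : (- f) k = - f k. Proof. by []. Qed.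
Lemma coefpsB (f g : R) k : (f - g) k = f k - g k. Proof. by []. Qed.
Lemma coefpsM (f g : R) k : (f * g) k = \sum_(i < k.+1) f i * g (k - i)%N.
Proof. by []. Qed.
Lemma eqmodX_refl n (f : R) : eqmodX n f f.
Proof. by []. Qed.

Lemma eqmodX_add n (f f' g g' : R) :
  eqmodX n f f' -> eqmodX n g g' -> eqmodX n (f + g) (f' + g').
Proof. by move=> eq_f eq_g k kn; rewrite !coefpsD eq_f ?eq_g. Qed.

Lemma eqmodX_exp n (f g : R) q : eqmodX n f g -> eqmodX n (f ^+ q) (g ^+ q).
Proof.
move=> eq_fg; elim: q => [|q IHq]; first by rewrite !expr0.
by rewrite !exprS; apply: eqmodX_mul.
Qed.

Lemma eqmodX_sub0 n (f g : R) : eqmodX n (f - g) 0 <-> eqmodX n f g.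
Proof.
split=> eqfg k kn; have := eqfg k kn; rewrite coefpsB coefps0.
  by move/eqP; rewrite subr_eq0 => /eqP.
by move->; rewrite subrr.
Qed.

Lemma eqmodX0_mul a b (f g : R) :
  eqmodX a f 0 -> eqmodX b g 0 -> eqmodX (a + b) (f * g) 0.
Proof.
move=> fa gb k kab; rewrite coefpsM; apply: big1 => i _.
have [ia|ai] := ltnP i a; first by rewrite fa ?mul0r.
by rewrite gb ?mulr0 //; have := ltn_ord i; lia.
Qed.

Lemma coef_mul_lowest a b (f g : R) :
  eqmodX a f 0 -> eqmodX b g 0 -> (f * g) (a + b)%N = f a * g b.
Proof.
move=> fa gb; rewrite coefpsM (bigD1 (Ordinal (leq_addr b a : a < (a + b).+1)%N)) //=.
rewrite addKn big1 ?addr0 // => i /eqP neq_ia.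
have [ia|ai] := ltnP i a; first by rewrite fa ?mul0r.
have {}ai : (a < i)%N.
  by rewrite ltn_neqAle ai andbT; apply/eqP => a_eq_i; apply: neq_ia; exact/val_inj/esym.
by rewrite gb ?mulr0 //; have := ltn_ord i; lia.
Qed.

Lemma ps_lowest_coef (f : R) : f != 0 -> exists v, f v != 0 /\ eqmodX v f 0.
Proof.
move=> /eqP f_neq0.
have exf : exists k, f k != 0.
  apply: contra_notP f_neq0 => all0; apply: funext => k.
  by case: (eqVneq (f k) 0) => // fk; case: all0; exists k.
exists (ex_minn exf); case: ex_minnP => v fv vmin; split=> // i iv.
by apply/eqP; apply: contraTT iv => /vmin; rewrite -leqNgt.
Qed.

Lemma ps_mul_integral : GRing.integral_domain_axiom R.
Proof.
move=> f g /eqP fg0; apply: contraLR fg0 => /norP[/ps_lowest_coef[a [fa f0]]].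
move=> /ps_lowest_coef[b [gb g0]]; apply/eqP => /(congr1 (fun h : R => h (a + b)%N)).
by rewrite coef_mul_lowest // coefps0 => /eqP; rewrite mulf_eq0 (negPf fa) (negPf gb).
Qed.

End PowerSeriesRing.

Section PowerSeriesDomain.
Variable p : nat.
Local Notation R := (pser p).

Definition ps_unit : pred R := fun f => `[< exists g, g * f = 1 >].
Definition ps_inv (f : R) : R :=
  if pselect (exists g, g * f = 1) is left ex then projT1 (cid ex) else f.

Lemma ps_mulVr : {in ps_unit, left_inverse 1 ps_inv *%R}.
Proof.
move=> f /asboolP f_unit; rewrite /ps_inv.
by case: pselect => [f_inv|/(_ f_unit) []]; case: (cid f_inv).
Qed.

Lemma ps_unitP (f g : R) : g * f = 1 -> ps_unit f.
Proof. by move=> gf; apply/asboolP; exists g. Qed.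

Lemma ps_inv_out : {in [predC ps_unit], ps_inv =1 id}.
Proof. by move=> f /asboolPn f_nonunit; rewrite /ps_inv; case: pselect. Qed.

HB.instance Definition _ := GRing.ComNzRing_hasMulInverse.Build R ps_mulVr ps_unitP ps_inv_out.
HB.instance Definition _ := GRing.ComUnitRing_isIntegral.Build R (@ps_mul_integral p).

End PowerSeriesDomain.

Lemma coef_1subX_exp (F : comNzRingType) m k :
  ((1 - 'X : {poly F}) ^+ m)`_k = (-1) ^+ k * ('C(m, k))%:R.
Proof.
rewrite addrC exprD1n coef_sum.
transitivity (\sum_(i < m.+1 | i == k :> nat) (-1) ^+ i * ('C(m, i))%:R :> F).
  rewrite [RHS]big_mkcond; apply: eq_bigr => i _.
  rewrite -scaleN1r exprZn coefMn coefZ coefXn eq_sym.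
  by case: eqP => [->|_]; rewrite ?mulr1 ?mulr0 ?mul0rn // mulr_natr.
rewrite (big_ord1_eq _ (fun i => (-1) ^+ i * ('C(m, i))%:R)).
by case: ltnP => // mk; rewrite bin_small ?mulr0.
Qed.

Section BinomialSeries.
Variable p : nat.
Hypothesis p_prime : prime p.
Local Notation R := (pser p).

Lemma Frobenius_1subX K : (1 - 'X : {poly 'F_p}) ^+ (p ^ K) = 1 - 'X ^+ (p ^ K).
Proof.
have pchar_p : p \in [pchar {poly 'F_p}] by rewrite pchar_poly; exact: pchar_Fp.
have pnat_pK : [pchar {poly 'F_p}].-nat (p ^ K)%N.
  by rewrite (eq_pnat _ (pcharf_eq pchar_p)) pnatX pnat_id.
by rewrite exprDn_pchar // exprNn_pchar // expr1n.
Qed.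

Lemma coef_1subX_exp_mod K m k : (k < p ^ K)%N ->
  ((1 - 'X : {poly 'F_p}) ^+ m)`_k = ((1 - 'X) ^+ (m %% p ^ K))`_k.
Proof.
move=> kK; rewrite {1}(divn_eq m (p ^ K)) mulnC exprD exprM Frobenius_1subX.
have one_mod : eqmodX (p ^ K) (ps_of_poly (1 - 'X ^+ (p ^ K) : {poly 'F_p})) 1.
  by move=> i iK; rewrite /ps_of_poly coefB coefXn (ltn_eqF iK) subr0.
have := eqmodX_mul (eqmodX_exp (m %/ p ^ K) one_mod)
  (eqmodX_refl (ps_of_poly ((1 - 'X) ^+ (m %% p ^ K)))).
by rewrite expr1n mul1r -rmorphXn -rmorphM => /(_ k kK).
Qed.

Lemma padic_seq_mod (a : padic p) N M :
  (N <= M)%N -> (padic_seq a M %% p ^ N = padic_seq a N)%N.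
Proof.
move=> /subnKC <-; elim: (M - N)%N => [|j IHj].
  by rewrite addn0 modn_small // padic_bound.
by rewrite addnS -IHj -(padic_compat a (N + j)) modn_dvdm // dvdn_exp2l // leq_addr.
Qed.

Lemma tau_eqmodX (a : padic p) N :
  eqmodX (p ^ N) (tau a) (ps_of_poly ((1 - 'X) ^+ padic_seq a N)).
Proof.
move=> k kN; rewrite /tau /ps_of_poly -(coef_1subX_exp 'F_p).
have [Nk|kN'] := leqP N k; first by rewrite (coef_1subX_exp_mod _ kN) padic_seq_mod.
have kk : (k < p ^ k)%N by apply: ltn_expl; apply: prime_gt1.
by rewrite [RHS](coef_1subX_exp_mod _ kk) padic_seq_mod // ltnW.
Qed.

End BinomialSeries.

Section SparseSeries.
Variable p : nat.
Hypothesis p_prime : prime p.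
Local Notation R := (pser p).

Definition bincomb (l : seq ('F_p * nat)) : {poly 'F_p} :=
  \sum_(cm <- l) cm.1 *: (1 - 'X) ^+ cm.2.

Definition sparse_at J (s : R) := forall N, exists l : seq ('F_p * nat),
  [/\ (size l <= J)%N, all (fun cm => cm.2 < p ^ N)%N l &
      eqmodX (p ^ N) s (ps_of_poly (bincomb l))].

Definition sparse (s : R) := exists J, sparse_at J s.

Lemma bincomb_cons cm l : bincomb (cm :: l) = cm.1 *: (1 - 'X) ^+ cm.2 + bincomb l.
Proof. exact: big_cons. Qed.

Lemma bincomb_tuple q N (l : seq ('F_p * nat)) :
  (0 < q)%N -> (size l <= N)%N -> all (fun cm => cm.2 < q)%N l ->
  exists w : N.-tuple ('F_p * 'I_q), bincomb [seq (c.1, val c.2) | c <- w] = bincomb l.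
Proof.
move=> q_gt0; elim: N l => [|N IHN] [|[c m] l] //=.
- by move=> _ _; exists [tuple].
- move=> _ _; have [w ew] := IHN [::] isT isT.
  by exists [tuple of (0, Ordinal q_gt0) :: w]; rewrite /= bincomb_cons scale0r add0r.
- move=> lN /andP[mq lq]; have [w ew] := IHN l lN lq.
  by exists [tuple of (c, Ordinal mq) :: w]; rewrite /= !bincomb_cons ew.
Qed.

Lemma sparse1 : sparse 1.
Proof.
exists 1%N => N; exists [:: (1, 0%N)]; split=> //=; first by rewrite expn_gt0 prime_gt0.
by rewrite /bincomb big_seq1 scale1r expr0 rmorph1.
Qed.

Lemma sparseD s s' : sparse s -> sparse s' -> sparse (s + s').
Proof.
move=> [J sJ] [J' s'J'] ; exists (J + J')%N => N.
have [l [lJ lN sl]] := sJ N; have [l' [l'J l'N s'l']] := s'J' N.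
exists (l ++ l'); split; [by rewrite size_cat leq_add | by rewrite all_cat lN l'N |].
by rewrite /bincomb big_cat rmorphD; apply: eqmodX_add.
Qed.

Lemma sparseN s : sparse s -> sparse (- s).
Proof.
move=> [J sJ]; exists J => N; have [l [lJ lN sl]] := sJ N.
exists [seq (- cm.1, cm.2) | cm <- l]; split; [by rewrite size_map | by rewrite all_map |].
move=> k kN; rewrite coefpsN sl // /ps_of_poly /bincomb big_map !coef_sum -sumrN.
by apply: eq_bigr => cm _; rewrite !coefZ mulNr.
Qed.

Lemma sparseM s s' : sparse s -> sparse s' -> sparse (s * s').
Proof.
move=> [J sJ] [J' s'J']; exists (J * J')%N => N.
have [l [lJ lN sl]] := sJ N; have [l' [l'J l'N s'l']] := s'J' N.
exists [seq (c.1 * c'.1, ((c.2 + c'.2) %% p ^ N)%N) | c <- l, c' <- l']; split.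
- by rewrite size_allpairs leq_mul.
- by apply/allP => _ /allpairsP[[c c'] [_ _ ->]]; rewrite ltn_mod expn_gt0 prime_gt0.
move=> k kN; rewrite (eqmodX_mul sl s'l' kN) -rmorphM /= !coef_ps_of_poly.
rewrite /bincomb big_distrl big_allpairs_dep !coef_sum; apply: eq_bigr => c _.
rewrite big_distrr !coef_sum; apply: eq_bigr => c' _.
by rewrite /= -scalerAl -scalerAr scalerA -exprD !coefZ (coef_1subX_exp_mod _ _ kN).
Qed.

Lemma sparse_ga_hom (r : grpalg p) : sparse (ga_hom r).
Proof.
exists (size r) => N; exists [seq (c.1, padic_seq c.2 N) | c <- r].
split; [by rewrite size_map | by elim: r => //= c r ->; rewrite padic_bound |].
move=> k kN; rewrite /ga_hom /ps_of_poly /bincomb big_map coef_sum.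
by apply: eq_bigr => c _; rewrite coefZ (tau_eqmodX _ _ kN).
Qed.

End SparseSeries.

Lemma pow2_gt_quadratic N : (8 <= N)%N -> (2 * N * N + 8 * N < 2 ^ N)%N.
Proof.
move=> /subnKC <-; elim: (N - 8)%N => [//|j IHj].
rewrite addnS expnS.
apply: leq_ltn_trans (_ : _ <= 2 * (2 * (8 + j) * (8 + j) + 8 * (8 + j)))%N _; first by nia.
by rewrite ltn_pmul2l.
Qed.

Section Diagonal.
Variable p : nat.
Hypothesis p_prime : prime p.
Local Notation R := (pser p).
Variable dn : nat -> R.

Let p_gt1 : (1 < p)%N := prime_gt1 p_prime.

Let leq_pexpS N : (p ^ N <= p ^ N.+1)%N.
Proof. by rewrite leq_exp2l. Qed.

Definition block N := (p ^ N.+1 - p ^ N).-tuple 'F_p.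

Definition extend N (D : R) (b : block N) : R :=
  fun k => if (k < p ^ N)%N then D k else nth 0 b (k - p ^ N).

Lemma extend_low N D (b : block N) k : (k < p ^ N)%N -> extend D b k = D k.
Proof. by rewrite /extend => ->. Qed.

Lemma extend_block N D (b : block N) (i : 'I_(p ^ N.+1 - p ^ N)) :
  extend D b (p ^ N + i)%N = tnth b i.
Proof. by rewrite /extend ltnNge leq_addr addKn (tnth_nth 0). Qed.

Lemma extend_high N D (b : block N) k : (p ^ N.+1 <= k)%N -> extend D b k = 0.
Proof.
move=> Nk; rewrite /extend ltnNge (leq_trans (leq_pexpS N) Nk) /= nth_default //.
by rewrite size_tuple leq_sub2r.
Qed.

Definition poly_code N := N.-tuple ('F_p * 'I_(p ^ N.+2)).
Definition code_poly N (w : poly_code N) := bincomb [seq (c.1, val c.2) | c <- w].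
Definition relation_code N := ('I_N.+1 * 'I_N.+1 * (poly_code N * poly_code N))%type.

(* [(n, v, w, w')] encodes the relation [t (D' - dn n) = s] modulo
   [x^(p^(N+1) + v)], where [t], [s] are the polynomials coded by [w], [w'],
   [t] has order [v], and [D'] is [D] extended by [b]. *)
Definition satisfies N (D : R) (b : block N) (r : relation_code N) :=
  let: (n, v, (w, w')) := r in
  [/\ eqmodX v (ps_of_poly (code_poly w)) 0, (code_poly w)`_v != 0 &
      eqmodX (p ^ N.+1 + v) (ps_of_poly (code_poly w) * (extend D b - dn n))
                            (ps_of_poly (code_poly w'))].

(* Two blocks satisfying the same relation differ by a series [E] of order
   [u < p^(N+1)], and then [t E] has the nonzero coefficient [t_v E_u] at
   [v + u]. *)
Lemma satisfies_inj N D (b b' : block N) r : satisfies D b r -> satisfies D b' r -> b = b'.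
Proof.
case: r => [[n v] [w w']] [t0 tv eq_b] [_ _ eq_b'].
set t := ps_of_poly (code_poly w) in t0 tv eq_b eq_b'.
pose E := extend D b - extend D b'.
have tE0 : eqmodX (p ^ N.+1 + v) (t * E) 0.
  have -> : t * E = t * (extend D b - dn n) - t * (extend D b' - dn n) by rewrite /E; ring.
  by apply/eqmodX_sub0 => k kN; rewrite eq_b // eq_b'.
apply: eq_from_tnth => i; apply/eqP; apply: contraT => b_neq.
have E_neq0 : E != 0.
  apply: contraNneq b_neq => /(congr1 (fun f : R => f (p ^ N + i)%N)).
  by rewrite /E coefpsB !extend_block coefps0 => /eqP; rewrite subr_eq0.
have [u [Eu E0]] := ps_lowest_coef E_neq0.
have u_lt : (u < p ^ N.+1)%N.
  by rewrite ltnNge; apply: contra Eu => Nu; rewrite /E coefpsB !extend_high // subrr.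
have := tE0 (v + u)%N; rewrite coef_mul_lowest // coefps0 => /(_ _)/eqP.
by rewrite mulf_eq0 (negPf tv) (negPf Eu); apply; rewrite addnC ltn_add2r.
Qed.

Lemma card_block N : #|{: block N}| = (p ^ (p ^ N.+1 - p ^ N))%N.
Proof. by rewrite card_tuple card_Fp. Qed.

Lemma card_relation_code N :
  #|{: relation_code N}| = (N.+1 * N.+1 * (p ^ (N.+3 * N) * p ^ (N.+3 * N)))%N.
Proof. by rewrite !card_prod !card_tuple card_prod card_Fp // !card_ord -expnS -expnM. Qed.

Lemma card_relation_code_lt N : (8 <= N)%N -> (#|{: relation_code N}| < #|{: block N}|)%N.
Proof.
move=> N8; rewrite card_relation_code card_block.
have N_lt : (N.+1 <= p ^ N)%N.
  by apply: leq_trans (ltn_expl N (ltnSn 1)) _; rewrite leq_exp2r ?(leq_trans _ N8) // ltnW.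
apply: (@leq_ltn_trans (p ^ (N + N + (N.+3 * N + N.+3 * N)))).
  by rewrite !expnD !leq_mul.
rewrite ltn_exp2l // (_ : N + N + _ = 2 * N * N + 8 * N)%N; last by lia.
apply: leq_trans (pow2_gt_quadratic N8) _.
apply: (@leq_trans (p ^ N)); first by rewrite leq_exp2r ?(leq_trans _ N8) // ltnW.
by rewrite expnS -[X in (_ - X)%N]mul1n -mulnBl leq_pmull // subn_gt0.
Qed.

Lemma exists_free_block N D : (8 <= N)%N -> exists b : block N, forall r, ~ satisfies D b r.
Proof.
move=> N8; apply: contrapT => no_free.
have rel (b : block N) : exists r : relation_code N, satisfies D b r.
  by apply: contrapT => b_free; apply: no_free; exists b => r sat; apply: b_free; exists r.
pose f b := projT1 (cid (rel b)).
have fP b : satisfies D b (f b) by rewrite /f; case: cid.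
have f_inj : injective f by move=> b b' eq_f; apply: satisfies_inj (fP b) _; rewrite eq_f.
by have := leq_card f f_inj; rewrite leqNgt card_relation_code_lt.
Qed.

Definition free_block N (D : R) : block N :=
  if pselect (exists b : block N, forall r, ~ satisfies D b r) is left fb
  then projT1 (cid fb) else nseq_tuple _ 0.

Lemma free_blockP N D : (8 <= N)%N -> forall r, ~ satisfies D (free_block N D) r.
Proof.
move=> N8; rewrite /free_block; case: pselect => [fb|[]]; last exact: exists_free_block.
by case: cid.
Qed.

Fixpoint approx N : R :=
  if N is N'.+1 then extend (approx N') (free_block N' (approx N')) else 0.

Definition diag : R := fun k => approx k.+1 k.

Lemma approx_stable N M k : (N <= M)%N -> (k < p ^ N)%N -> approx M k = approx N k.
Proof.
move=> /subnKC <- kN; elim: (M - N)%N => [|j IHj]; first by rewrite addn0.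
by rewrite addnS /= extend_low // (leq_trans kN) // leq_exp2l // leq_addr.
Qed.

Lemma eqmodX_diag N : eqmodX (p ^ N) diag (approx N).
Proof.
move=> k kN; rewrite /diag; have [kN'|Nk] := leqP k.+1 N.
  by rewrite (approx_stable kN') // (leq_trans (ltn_expl _ p_gt1)) ?leq_pexpS.
by rewrite (approx_stable (ltnW Nk)).
Qed.

(* A relation [t (diag - dn n) = s] with [t != 0] and [t], [s] sparse would,
   truncated at a large stage [N], be a relation satisfied by the block chosen
   at stage [N]. *)
Lemma diag_indep (n : nat) : indep_over (@sparse p) (diag - dn n).
Proof.
move=> t s [J tJ] [J' sJ'] ts; apply/eqP; apply: contraT => t_neq0.
have [v [tv t0]] := ps_lowest_coef t_neq0.
pose N := maxn (maxn n v) (maxn (maxn J J') 8).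
have [nN vN JN J'N N8] : [/\ n <= N, v <= N, J <= N, J' <= N & 8 <= N]%N.
  by rewrite /N; split; lia.
have N_lt : (N < p ^ N.+1)%N := leq_trans (ltn_expl N p_gt1) (leq_pexpS N).
have N2_gt : (p ^ N.+1 + N < p ^ N.+2)%N.
  have : (2 * p ^ N.+1 <= p * p ^ N.+1)%N by rewrite leq_mul2r p_gt1 orbT.
  by rewrite (expnS p N.+1); lia.
have [l [lJ lN tl]] := tJ N.+2; have [l' [l'J l'N sl']] := sJ' N.+2.
have pN2_gt0 : (0 < p ^ N.+2)%N by rewrite expn_gt0 ltnW.
have [w tw] := bincomb_tuple pN2_gt0 (leq_trans lJ JN) lN.
have [w' sw'] := bincomb_tuple pN2_gt0 (leq_trans l'J J'N) l'N.
exfalso; apply: (@free_blockP N (approx N) N8 (inord n, inord v, (w, w'))).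
rewrite /satisfies /code_poly tw sw' !inordK ?ltnS //; set u := ps_of_poly (bincomb l).
have ut : eqmodX (p ^ N.+2) u t by move=> k kN; rewrite tl.
have u0 : eqmodX v u 0 by move=> k kv; rewrite ut ?t0 //; lia.
split=> //; first by rewrite -coef_ps_of_poly -/u ut //; lia.
have approx_diag : eqmodX (v + p ^ N.+1) (u * (diag - dn n)) (u * (approx N.+1 - dn n)).
  apply/eqmodX_sub0; rewrite (_ : _ - _ = u * (diag - approx N.+1)); last by ring.
  exact/eqmodX0_mul/eqmodX_sub0/eqmodX_diag.
move=> k kN; rewrite -/(approx N.+1) -approx_diag; last by lia.
have kN2 : (k < p ^ N.+2)%N by lia.
by rewrite (eqmodX_mul ut (eqmodX_refl _) kN2) ts sl'.
Qed.

End Diagonal.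

Section TensorKernel.
Variable p : nat.
Hypothesis p_prime : prime p.
Local Notation R := (pser p).

Lemma balanced_linear_form (phi : R -> {fraction R}) :
  {morph phi : a b / a + b} ->
  (forall r a, phi (ga_hom r * a) = (ga_hom r)%:F * phi a) ->
  balanced (fun a b => phi a * b%:F).
Proof.
move=> phiD phiZ; split.
- by move=> a a' b; rewrite -[ps_add a a']/(a + a') phiD mulrDl.
- by move=> a b b'; rewrite -[ps_add b b']/(b + b') rmorphD mulrDr.
- move=> r a b; rewrite -[ps_mul _ a]/(ga_hom r * a) -[ps_mul _ b]/(ga_hom r * b).
  by rewrite phiZ rmorphM; ring.
Qed.

Definition diag_tensor (x : R) : tensor p := [:: (x, 1); (1, - x)].

Lemma tmult_diag_tensor x : tmult (diag_tensor x) = ps_zero p.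
Proof.
apply: funext => k; rewrite /tmult /diag_tensor big_cons big_seq1 /=.
by change ((x * 1 + 1 * - x) k = (0 : R) k); rewrite mulr1 mul1r subrr.
Qed.

Lemma diag_tensor_neq (x y : R) :
  indep_over (@sparse p) (x - y) -> ~ tensor_eq (diag_tensor x) (diag_tensor y).
Proof.
move=> xy_indep xy_eq.
have [phi [phiD phiZ phi1 phi_xy]] := exists_linear_form (sparse1 p_prime)
  (@sparseD p) (@sparseN p) (sparseM p_prime) xy_indep.
have phi_ga r a : phi (ga_hom r * a) = (ga_hom r)%:F * phi a.
  exact: phiZ (sparse_ga_hom p_prime r).
have := xy_eq _ _ (balanced_linear_form phiD phi_ga).
rewrite /diag_tensor !big_cons !big_nil /= phi1 !mul0r !addr0 rmorph1 !mulr1 => phi_x.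
have := phiD (x - y) y; rewrite subrK phi_x phi_xy -[X in X = _]add0r => /addIr /eqP.
by rewrite eq_sym oner_eq0.
Qed.

End TensorKernel.

Theorem proposition3p3 (p : nat) (hp : prime p) :
  ~ exists f : nat -> tensor p,
      (forall n, tmult (f n) = ps_zero p) /\
      (forall u : tensor p, tmult u = ps_zero p -> exists n, tensor_eq u (f n)).
Proof.
move=> [f [_ f_onto]].
pose dn n := if pselect (exists x, tensor_eq (diag_tensor x) (f n)) is left ex
             then projT1 (cid ex) else 0.
have [n diag_f] := f_onto _ (tmult_diag_tensor (diag dn)).
have dn_f : tensor_eq (diag_tensor (dn n)) (f n).
  by rewrite /dn; case: pselect => [ex|[]]; [case: cid | exists (diag dn)].
apply: (diag_tensor_neq hp (@diag_indep _ hp dn n)) => M beta beta_bal.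
by rewrite (diag_f M beta beta_bal) (dn_f M beta beta_bal).
Qed.
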